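(* Let $G$ be a $2$-connected graph not containing $K_{2,3}$ as a minor, and let $K_0$ be a connected subgraph of $G$. Then $|N(K_1)|=2$ for every component $K_1$ of $G-(K_0\cup N(K_0))$.
   Context: Graphs are simple. For a subgraph $H$ of $G$, $N(H)$ denotes the set of vertices of $G$ not in $H$ that have a neighbour in $H$; $G-(K_0\cup N(K_0))$ is obtained by deleting the vertices of $K_0$ and of $N(K_0)$. *)

(* A finite simple graph is a symmetric irreflexive relation
   e : rel T on a finType T. Vertex sets are {set T}. *)
From mathcomp Require Import all_boot.
Set Implicit Arguments. Unset Strict Implicit. Unset Printing Implicit Defensive.

Section Graphs.
Variables (T : finType) (e : rel T).

Definition connected_in (S : {set T}) : Prop :=
  S != set0 /\
  forall x y, x \in S -> y \in S ->
    connect [rel a b | [&& a \in S, b \in S & e a b]] x y.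

Definition nbhd (S : {set T}) : {set T} :=
  [set y | (y \notin S) && [exists x in S, e x y]].

Definition component_of (D C : {set T}) : Prop :=
  C \subset D /\ connected_in C /\
  (forall C' : {set T}, C \subset C' -> C' \subset D -> connected_in C' -> C' = C).

Definition two_connected : Prop :=
  2 < #|T| /\ connected_in [set: T] /\ (forall v : T, connected_in [set~ v]).

Definition has_K23_minor : Prop :=
  exists (a : 'I_2 -> {set T}) (b : 'I_3 -> {set T}),
    [/\ (forall i, connected_in (a i)) /\ (forall j, connected_in (b j)),
        (forall i i', i != i' -> [disjoint a i & a i']),
        (forall j j', j != j' -> [disjoint b j & b j']),
        (forall i j, [disjoint a i & b j]) &
        (forall i j, exists x y, [/\ x \in a i, y \in b j & e x y])].

End Graphs.

(* K1 lies outside K0 and N(K0), so by maximality of K1 its neighbours all lie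
   in N(K0): each of them is adjacent to both K0 and K1. Three of them, as
   singleton branch sets, would form a K_{2,3} minor together with K0 and K1.
   Conversely N(K1) separates K1 from the nonempty set K0, so by
   2-connectivity it has at least two vertices. *)
From mathcomp Require Import all_boot.
Set Implicit Arguments. Unset Strict Implicit. Unset Printing Implicit Defensive.

Lemma exit_edge (T : finType) (r : rel T) (A : {set T}) x y :
  connect r x y -> x \in A -> y \notin A ->
  exists a b, [/\ r a b, a \in A & b \notin A].
Proof.
move/connectP=> [p]; elim: p x => [|z p IHp] x /=; first by move=> _ -> ->.
move=> /andP[rxz pz] ly xA yA.
by case: (boolP (z \in A)) => [zA|zNA]; [exact: IHp zA yA | exists x, z].
Qed.

Section InducedConnectivity.
Variables (T : finType) (e : rel T).

Local Notation induced S := [rel a b | [&& a \in S, b \in S & e a b]].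

Lemma connect_induced_sub (A B : {set T}) x y :
  A \subset B -> connect (induced A) x y -> connect (induced B) x y.
Proof.
move=> sAB; apply: connect_sub => a b /= /and3P[aA bA eab].
by apply: connect1; rewrite /= (subsetP sAB _ aA) (subsetP sAB _ bA).
Qed.

Lemma connected_in_set1 x : connected_in e [set x].
Proof.
split; first by apply/set0Pn; exists x; rewrite inE.
by move=> a b /set1P-> /set1P->; apply: connect0.
Qed.

Lemma connected_in_meets_nbhd (S C : {set T}) x y :
  connected_in e S -> x \in S -> y \in S -> x \in C -> y \notin C ->
  exists z, z \in S :&: nbhd e C.
Proof.
move=> [_ cS] xS yS xC yNC.
have [a [b [/and3P[_ bS eab] aC bNC]]] := exit_edge (cS x y xS yS) xC yNC.
by exists b; rewrite !inE bS bNC /=; apply/existsP; exists a; rewrite aC.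
Qed.

Lemma two_connected_nbhd_gt1 (C : {set T}) x y :
  two_connected e -> x \in C -> y \notin C :|: nbhd e C -> 1 < #|nbhd e C|.
Proof.
move=> [_ [cT cTv]] xC; rewrite inE negb_or => /andP[yNC yNN].
rewrite ltnNge; apply/negP=> N_le1.
have [N0 | [v vN]] := set_0Vmem (nbhd e C).
  have [z] := connected_in_meets_nbhd cT (in_setT x) (in_setT y) xC yNC.
  by rewrite N0 setI0 inE.
have Nv : nbhd e C =i pred1 v by apply: card_le1P.
have xNv : x \in [set~ v].
  by rewrite !inE; apply: contraTneq vN => <-; rewrite inE xC.
have yNv : y \in [set~ v] by rewrite !inE; apply: contraNneq yNN => ->.
have [z] := connected_in_meets_nbhd (cTv v) xNv yNv xC yNC.
by rewrite inE Nv !inE => /andP[/negPf->].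
Qed.

Lemma K23_minor_of_common_nbhd (A B Y : {set T}) :
  connected_in e A -> connected_in e B -> [disjoint A & B] ->
  Y \subset nbhd e A :&: nbhd e B -> 2 < #|Y| -> has_K23_minor e.
Proof.
move=> cA cB dAB sY /card_gt2P[y1 [y2 [y3 [[y1Y y2Y y3Y] [n12 n23 n31]]]]].
pose y (j : 'I_3) := tnth [tuple y1; y2; y3] j.
pose side (i : 'I_2) := if val i == 0 then A else B.
have yN j : (y j \in nbhd e A) && (y j \in nbhd e B).
  rewrite -in_setI; apply: (subsetP sY).
  by case: j => [[|[|[|//]]] ?]; rewrite /y (tnth_nth y1).
have y_inj : injective y.
  by apply/tuple_uniqP; rewrite /= !inE negb_or n12 n23 eq_sym n31.
have yNside i j : y j \in nbhd e (side i).
  by have /andP[yA yB] := yN j; case: i => [[|[|//]] ?].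
exists side, (fun j => [set y j]); split.
- split=> [i|j]; last exact: connected_in_set1.
  by case: i => [[|[|//]] ?].
- case=> [[|[|//]] ?] [[|[|//]] ?] //= _; by rewrite // disjoint_sym.
- move=> j j' nj; rewrite disjoints1 inE (inj_eq y_inj); exact: nj.
- move=> i j; rewrite disjoint_sym disjoints1.
  by have := yNside i j; rewrite inE => /andP[].
- move=> i j; have := yNside i j.
  rewrite inE => /andP[_ /existsP[x /andP[xi exy]]].
  by exists x, (y j); rewrite set11.
Qed.

Hypothesis e_sym : symmetric e.

Lemma connected_in_setU1 (C : {set T}) x y :
  connected_in e C -> x \in C -> e x y -> connected_in e (y |: C).
Proof.
move=> [_ cC] xC exy; split; first by apply/set0Pn; exists y; rewrite setU11.
have ind_sym : connect_sym (induced (y |: C)).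
  by apply: sym_connect_sym => a b /=; rewrite e_sym andbCA.
have y_to z : z \in C -> connect (induced (y |: C)) y z.
  move=> zC; apply: (connect_trans (y := x)).
    by apply: connect1; rewrite /= setU11 setU1r // e_sym.
  exact: connect_induced_sub (subsetUr _ _) (cC x z xC zC).
move=> a b /setU1P[->|aC] /setU1P[->|bC].
- exact: connect0.
- exact: y_to.
- by rewrite ind_sym; apply: y_to.
- exact: connect_induced_sub (subsetUr _ _) (cC a b aC bC).
Qed.

Lemma component_nbhd_disjoint (D C : {set T}) :
  component_of e D C -> [disjoint nbhd e C & D].
Proof.
move=> [sCD [cC maxC]]; apply/pred0P=> y /=; apply/negbTE/andP=> [[yN yD]].
move: yN; rewrite inE => /andP[yNC /existsP[x /andP[xC exy]]].
have CyD : y |: C \subset D by rewrite subUset sub1set yD sCD.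
have := maxC _ (subsetUr _ _) CyD (connected_in_setU1 cC xC exy).
by move=> /setP/(_ y); rewrite setU11 (negPf yNC).
Qed.

Lemma disjoint_nbhd_swap (A B : {set T}) :
  [disjoint B & A :|: nbhd e A] -> [disjoint A & nbhd e B].
Proof.
move=> dB; apply/pred0P=> y /=; apply/negbTE/andP=> [[yA]].
rewrite inE => /andP[_ /existsP[x /andP[xB exy]]].
have xN : x \in A :|: nbhd e A.
  rewrite inE; case: (boolP (x \in A)) => //= xNA.
  by rewrite inE xNA; apply/existsP; exists y; rewrite yA e_sym.
by rewrite (disjointFr dB xB) in xN.
Qed.

End InducedConnectivity.

Theorem lemma4p2 (T : finType) (e : rel T)
  (e_sym : symmetric e) (e_irr : irreflexive e)
  (K0 K1 : {set T}) :
  two_connected e -> ~ has_K23_minor e ->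
  connected_in e K0 ->
  component_of e (~: (K0 :|: nbhd e K0)) K1 ->
  #|nbhd e K1| = 2.
Proof.
move=> G2 noK23 cK0 compK1; have [sK1 [cK1 _]] := compK1.
have dK1 : [disjoint K1 & K0 :|: nbhd e K0] by rewrite disjoints_subset.
have dK01 : [disjoint K0 & K1].
  by rewrite disjoint_sym (disjointWr (subsetUl _ _) dK1).
have N1_sub_N0 : nbhd e K1 \subset nbhd e K0.
  apply/subsetP=> y yN1.
  have := disjointFr (component_nbhd_disjoint e_sym compK1) yN1.
  move/negbT; rewrite inE negbK => /setUP[yK0|//].
  by rewrite (disjointFl (disjoint_nbhd_swap e_sym dK1) yN1) in yK0.
have [x xK1] := set0Pn _ (proj1 cK1).
have [y yK0] := set0Pn _ (proj1 cK0).
apply/eqP; rewrite eqn_leq -ltnS ltnNge; apply/andP; split.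
  apply/negP=> N1_gt2; apply: noK23.
  apply: K23_minor_of_common_nbhd cK0 cK1 dK01 _ N1_gt2.
  by rewrite subsetI N1_sub_N0 subxx.
apply: (two_connected_nbhd_gt1 (y := y) G2 xK1).
rewrite inE negb_or (disjointFr dK01 yK0) /=.
by apply: contraL yK0 => /(subsetP N1_sub_N0); rewrite inE => /andP[].
Qed.
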